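(* Let $\mathcal{H}$ be a Hilbert space, $f,g\colon\mathcal{H}\to\mathbb{R}$ convex continuous, $\mathcal{C}_f=\arg\min f\neq\emptyset$, $f_\ast=\min f$, $r>0$ and $\mathcal{U}_r:=\{x: d(x,\mathcal{C}_f)\le r\}$. Then for every $x\in\mathcal{U}_r$ and every $\delta>0$, $$g(x)-f(x)\;\le\;\big(\|s_g-s_f|_{\mathcal{U}_r}+\delta\big)\,d(x,\mathcal{C}_f)\;+\;\frac{\|s_g-s_f|_{\mathcal{U}_r}}{\delta}\,\big(f(x)-f_\ast\big)\;+\;\|g-f|_{\mathcal{C}_f}.$$
   Context: $\partial f(x)=\{v: f(y)-f(x)\ge\langle v,y-x\rangle\ \forall y\}$ is the convex subdifferential and $s_f(x):=\operatorname{dist}(0,\partial f(x))$ the slope (similarly for $g$). For $\omega\colon\mathcal{H}\to\mathbb{R}$ and $\mathcal{U}\subset\mathcal{H}$, $\|\omega|_{\mathcal{U}}:=\sup_{x\in\mathcal{U}}\max\{\omega(x),0\}$. *)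

From HB Require Import structures.
From mathcomp Require Import all_boot all_order all_algebra.
From mathcomp Require Import all_classical all_reals all_analysis.
Set Implicit Arguments. Unset Strict Implicit. Unset Printing Implicit Defensive.
Import Order.TTheory GRing.Theory Num.Theory.
Import numFieldNormedType.Exports.
Local Open Scope classical_set_scope.
Local Open Scope ring_scope.

Definition hilbert_inner (R : realType) (H : completeNormedModType R)
    (ip : H -> H -> R) : Prop :=
  [/\ (forall x y, ip x y = ip y x),
      (forall x y z, ip (x + y) z = ip x z + ip y z),
      (forall (a : R) x y, ip (a *: x) y = a * ip x y) &
      (forall x, ip x x = `|x| ^+ 2)].

Definition convex_fun (R : realType) (H : completeNormedModType R)
    (f : H -> R) : Prop :=
  forall (t : R) x y, 0 <= t -> t <= 1 ->
    f (t *: x + (1 - t) *: y) <= t * f x + (1 - t) * f y.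

Definition argmin (R : realType) (H : completeNormedModType R) (f : H -> R)
  : set H := [set x | forall y, f x <= f y].

Definition fmin (R : realType) (H : completeNormedModType R) (f : H -> R)
  : \bar R := ereal_inf [set (f x)%:E | x in [set: H]].

Definition dist_set (R : realType) (H : completeNormedModType R)
    (x : H) (C : set H) : \bar R :=
  ereal_inf [set (`|x - c|)%:E | c in C].

Definition subdiff (R : realType) (H : completeNormedModType R)
    (ip : H -> H -> R) (f : H -> R) (x : H) : set H :=
  [set v | forall y, ip v (y - x) <= f y - f x].

Definition slope (R : realType) (H : completeNormedModType R)
    (ip : H -> H -> R) (f : H -> R) (x : H) : \bar R :=
  dist_set 0 (subdiff ip f x).

Definition pos_sup (R : realType) (H : completeNormedModType R)
    (w : H -> \bar R) (U : set H) : \bar R :=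
  ereal_sup [set maxe (w x) 0%E | x in U].

From HB Require Import structures.
From mathcomp Require Import all_boot all_order all_algebra.
From mathcomp Require Import all_classical all_reals all_analysis.
From mathcomp Require Import ring lra.
Import Order.TTheory GRing.Theory Num.Theory.
Import numFieldNormedType.Exports.
Local Open Scope classical_set_scope.
Local Open Scope ring_scope.

(* Write C = argmin f, fmin = min f, d = dist(x, C), and Sr, Tr for the two
   sups S, T of the statement.  The estimate comes from a discrete descent
   from x along the proximal point iteration of f with a small step tau:
   - a proximal step y -> z exists (a minimizing sequence of the strongly
     convex objective tau f + |. - y|^2 / 2 is Cauchy), is an implicit
     gradient step y = z + tau u with u a subgradient of f at z, decreases
     f by tau |u|^2, and gets no farther from any point of C, so that all
     iterates stay in U_r;
   - where f has a subgradient u, the slope gap gives a subgradient of g of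
     norm about |u| + Sr, so g grows at rate at most |u| + Sr along a step;
     if |u| <= delta, comparison with a nearly closest point of C bounds the
     gap g - f by Tr + (delta + Sr) d;
   - a step with |u| > delta decreases f by more than tau delta |u|, which
     pays for the growth of g at the price (Sr / delta) (f - fmin); as f - fmin
     is finite, the first case is reached after finitely many steps.
   Continuity of g and letting tau, eps -> 0 give the estimate for finite Sr
   and Tr (gap_bound); the theorem follows after extended-real bookkeeping,
   the bound being trivial at a minimizer or when Sr or Tr is infinite. *)

Section InnerProduct.
Context {R : realType} {H : completeNormedModType R} {ip : H -> H -> R}.
Hypothesis hip : hilbert_inner ip.

Lemma ipDr x y z : ip x (y + z) = ip x y + ip x z.
Proof. by case: hip => sym addl _ _; rewrite sym addl !(sym x). Qed.

Lemma ipZr (a : R) x y : ip x (a *: y) = a * ip x y.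
Proof. by case: hip => sym _ scl _; rewrite sym scl sym. Qed.

Lemma ipNl x y : ip (- x) y = - ip x y.
Proof. by case: hip => _ _ scl _; rewrite -scaleN1r scl mulN1r. Qed.

Lemma ipNr x y : ip x (- y) = - ip x y.
Proof. by rewrite -scaleN1r ipZr mulN1r. Qed.

Lemma ip_self x : ip x x = `|x| ^+ 2.
Proof. by case: hip. Qed.

Lemma ipZl (a : R) x y : ip (a *: x) y = a * ip x y.
Proof. by case: hip. Qed.

Lemma normD2 x y : `|x + y| ^+ 2 = `|x| ^+ 2 + `|y| ^+ 2 + 2 * ip x y.
Proof.
case: (hip) => sym addl _ _.
rewrite -!ip_self addl !ipDr (sym y x); ring.
Qed.

Lemma normB2 x y : `|x - y| ^+ 2 = `|x| ^+ 2 + `|y| ^+ 2 - 2 * ip x y.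
Proof. by rewrite normD2 normrN ipNr; ring. Qed.

Lemma cauchy_schwarz x y : ip x y <= `|x| * `|y|.
Proof.
have [->|x0] := eqVneq x 0.
  by rewrite -[0](scale0r 0) ipZl mul0r normrZ normr0 !mul0r.
have [->|y0] := eqVneq y 0.
  by rewrite -[0](scale0r 0) ipZr mul0r normrZ normr0 mul0r mulr0.
have nx : 0 < `|x| by rewrite normr_gt0.
have ny : 0 < `|y| by rewrite normr_gt0.
have := sqr_ge0 (Num.norm (`|y| *: x - `|x| *: y)).
rewrite normB2 !normrZ ipZr ipZl !ger0_norm ?(ltW nx) ?(ltW ny) // => h.
have hxy : 0 < `|x| * `|y| by apply: mulr_gt0.
nra.
Qed.

Lemma midpoint_norm2 (a b y : H) :
  `|(2:R)^-1 *: (a + b) - y| ^+ 2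
    = (`|a - y| ^+ 2 + `|b - y| ^+ 2) / 2 - `|a - b| ^+ 2 / 4.
Proof.
have -> : (2:R)^-1 *: (a + b) - y = (2:R)^-1 *: ((a - y) + (b - y)).
  rewrite addrACA -opprD scalerBr; congr (_ - _).
  by rewrite -mulr2n -[y *+ 2]scaler_nat scalerA mulVf ?scale1r // pnatr_eq0.
have -> : a - b = (a - y) - (b - y) by rewrite opprB addrA subrK.
rewrite normrZ ger0_norm ?invr_ge0 ?ler0n // exprMn normD2 (normB2 (a - y)); by field.
Qed.

End InnerProduct.

Lemma convex_midpoint {R : realType} {H : completeNormedModType R} {f : H -> R} :
  convex_fun f -> forall a b : H, f ((2:R)^-1 *: (a + b)) <= (f a + f b) / 2.
Proof.
move=> cf a b; have half : 1 - (2:R)^-1 = 2^-1 by field.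
have h := cf (2:R)^-1 a b; rewrite half -scalerDr in h.
apply: le_trans (h _ _) _; [by rewrite invr_ge0 ler0n | by rewrite invf_le1 ?ler1n|].
lra.
Qed.

Lemma cvg_of_sq_dist_bound {R : realType} {V : completeNormedModType R}
    (u : nat -> V) (k : R) :
  (forall a b : nat, `|u a - u b| ^+ 2 <= k * (a.+1%:R^-1 + b.+1%:R^-1)) ->
  cvg (u @ \oo).
Proof.
move=> hu; have k0 : 0 <= k.
  by have := hu 0%N 0%N; rewrite subrr normr0 expr0n /= invr1; nra.
apply/cauchy_cvgP; apply: cauchy_exP => eps eps0.
have [N hN] : exists N : nat, 2 * k * N.+1%:R^-1 < eps ^+ 2.
  exists (Num.bound (2 * k / eps ^+ 2)).
  rewrite ltr_pdivrMr ?ltr0Sn // [eps ^+ 2 * _]mulrC -ltr_pdivrMr ?exprn_gt0 //.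
  apply: lt_le_trans (archi_boundP _) _; last by rewrite ler_nat.
  by rewrite divr_ge0 ?sqr_ge0 ?mulr_ge0.
exists (u N), N => // n /= leNn; rewrite -ball_normE /=.
have hn : n.+1%:R^-1 <= N.+1%:R^-1 :> R by rewrite lef_pV2 ?posrE ?ltr0Sn // ler_nat.
have d2 : `|u N - u n| ^+ 2 < eps ^+ 2.
  apply: le_lt_trans (hu N n) _.
  move: (ler_wpM2l k0 hn) hN; rewrite mulrDr.
  set a := n.+1%:R^-1; set b := N.+1%:R^-1; lra.
by rewrite -(ltr_pXn2r (n := 2)) ?nnegrE ?normr_ge0 ?ltW.
Qed.

Lemma le_of_cvg_upper {R : realType} {V : normedModType R} (h : V -> R)
    (u : nat -> V) (z : V) (m : R) :
  {for z, continuous h} -> u @ \oo --> z ->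
  (forall n, h (u n) <= m + n.+1%:R^-1) -> h z <= m.
Proof.
move=> hz uz hu; apply/ler_addgt0Pr => e e0.
have huz : (h \o u) @ \oo --> h z by apply: continuous_cvg.
have hcl := @closed_cvg _ _ \oo _ (h \o u) _ (closed_le (y := m + e)).
apply: (hcl _ _ (h z) huz).
have e0' : 0 <= e^-1 by rewrite invr_ge0 ltW.
exists (Num.bound e^-1) => // n /= hn; apply: le_trans (hu n) _; rewrite lerD2l.
rewrite -[e in X in _ <= X]invrK lef_pV2 ?posrE ?invr_gt0 ?ltr0Sn //.
by apply: le_trans (ltW (archi_boundP e0')) _; rewrite ler_nat ltnW.
Qed.

Definition closer {R : realType} {H : completeNormedModType R} (C : set H) (y x : H)
  : Prop := forall c, C c -> `|y - c| <= `|x - c|.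

Section Proximal.
Context {R : realType} {H : completeNormedModType R} {ip : H -> H -> R}.
Variables (f : H -> R) (fs tau : R) (y : H).
Hypothesis hip : hilbert_inner ip.
Hypothesis cf : convex_fun f.
Hypothesis contf : continuous f.
Hypothesis hfs : forall z, fs <= f z.
Hypothesis tau0 : 0 < tau.

Definition prox_obj (z : H) : R := tau * f z + `|z - y| ^+ 2 / 2.

Lemma prox_obj_continuous : continuous prox_obj.
Proof.
move=> z; apply: cvgD; first exact: cvgMl_tmp (contf z).
have hn : `|x - y| @[x --> z] --> `|z - y|.
  by apply: cvg_norm; apply: cvgB => //; exact: cvg_cst.
by apply: cvgMr_tmp; rewrite expr2; apply: cvgM.
Qed.

(* Strong convexity of the objective: two almost-minimizers are close. *)
Lemma prox_obj_near_min (m ea eb : R) (a b : H) :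
  (forall z, m <= prox_obj z) ->
  prox_obj a <= m + ea -> prox_obj b <= m + eb ->
  `|a - b| ^+ 2 <= 4 * (ea + eb).
Proof.
rewrite /prox_obj => hm ha hb.
have := hm ((2:R)^-1 *: (a + b)); rewrite (midpoint_norm2 hip).
have : tau * f ((2:R)^-1 *: (a + b)) <= tau * ((f a + f b) / 2).
  by rewrite ler_pM2l // convex_midpoint.
lra.
Qed.

(* The proximal point exists: a minimizing sequence is Cauchy by
   prox_obj_near_min, and its limit is a minimizer by continuity. *)
Lemma prox_obj_has_min : exists z, forall w, prox_obj z <= prox_obj w.
Proof.
have lb : forall w, tau * fs <= prox_obj w.
  move=> w; have : tau * fs <= tau * f w by rewrite ler_pM2l.
  have := divr_ge0 (sqr_ge0 `|w - y|) (ler0n R 2); rewrite /prox_obj; lra.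
have infE : has_inf (range prox_obj).
  by split; [exists (prox_obj y), y | exists (tau * fs) => _ [w _ <-]].
have hm : forall w, inf (range prox_obj) <= prox_obj w.
  by move=> w; apply: ge_inf; [case: infE | exists w].
have /choice [u hu] : forall n : nat, exists z,
    prox_obj z <= inf (range prox_obj) + n.+1%:R^-1.
  move=> n; have en : 0 < n.+1%:R^-1 :> R by rewrite invr_gt0 ltr0Sn.
  by have [_ [z _ <-] /ltW hz] := inf_adherent en infE; exists z.
have ucvg : cvg (u @ \oo).
  apply: (@cvg_of_sq_dist_bound _ _ _ 4) => a b.
  exact: prox_obj_near_min hm (hu a) (hu b).
exists (lim (u @ \oo)) => w; apply: le_trans (hm w).
exact: le_of_cvg_upper (prox_obj_continuous _) ucvg hu.
Qed.

(* First-order optimality of the proximal point z: (y - z) / tau is a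
   subgradient of f at z.  Compare z with z + t (w - z) and let t -> 0. *)
Lemma prox_variational (z : H) : (forall w, prox_obj z <= prox_obj w) ->
  forall w, ip (y - z) (w - z) <= tau * (f w - f z).
Proof.
move=> hz w; apply/ler_addgt0Pr => e e0.
set K := `|w - z| ^+ 2 / 2.
have K0 : 0 <= K by rewrite divr_ge0 ?sqr_ge0.
set t := e / (e + K).
have t0 : 0 < t by rewrite divr_gt0 //; lra.
have t1 : t <= 1 by rewrite ler_pdivrMr ?mul1r; lra.
have tK : t * K <= e by rewrite mulrAC ler_pdivrMr; nra.
have := hz (t *: w + (1 - t) *: z); rewrite /prox_obj.
have -> : t *: w + (1 - t) *: z - y = (z - y) + t *: (w - z).
  by rewrite scalerBl scale1r scalerBr addrCA addrAC.
rewrite (normD2 hip (z - y)) normrZ (ger0_norm (ltW t0)) (ipZr hip) exprMn.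
have -> : `|w - z| ^+ 2 = 2 * K by rewrite /K; field.
have : tau * f (t *: w + (1 - t) *: z) <= tau * (t * f w + (1 - t) * f z).
  by rewrite ler_pM2l // cf // ltW.
have -> : ip (y - z) (w - z) = - ip (z - y) (w - z) by rewrite -(ipNl hip) opprB.
nra.
Qed.

Lemma prox_step : exists z u, [/\ subdiff ip f z u, y - z = tau *: u,
  tau * `|u| ^+ 2 <= f y - f z & closer (argmin f) z y].
Proof.
have [z /prox_variational hz] := prox_obj_has_min.
have yz : y - z = tau *: (tau^-1 *: (y - z)) by rewrite scalerA mulfV ?gt_eqF ?scale1r.
exists z, (tau^-1 *: (y - z)); split => //.
- move=> w /=; rewrite (ipZl hip) -(ler_pM2l tau0) mulrA mulfV ?gt_eqF // mul1r.
  exact: hz.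
- have := hz y; rewrite (ip_self hip) [in X in X -> _]yz normrZ gtr0_norm //.
  by rewrite exprMn expr2 -mulrA ler_pM2l.
- move=> c hc; rewrite -(ler_pXn2r (n := 2)) ?nnegrE ?normr_ge0 //.
  have -> : y - c = (y - z) + (z - c) by rewrite addrA subrK.
  have := hz c; have fcz : f c <= f z by apply: hc.
  rewrite (normD2 hip (y - z)) -[ip _ (z - c)]opprK -(ipNr hip) opprB.
  have : tau * (f c - f z) <= 0 by rewrite pmulr_rle0 // subr_le0.
  have := sqr_ge0 `|y - z|; lra.
Qed.

End Proximal.

Section GapEstimate.
Context {R : realType} {H : completeNormedModType R} {ip : H -> H -> R}.
Variables (f g : H -> R) (x : H) (fs Tr Sr d0 delta : R).
Hypothesis hip : hilbert_inner ip.
Hypothesis cf : convex_fun f.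
Hypothesis contf : continuous f.
Hypothesis contg : continuous g.
Hypothesis hfs : forall z, fs <= f z.
Hypothesis gap_argmin : forall c, argmin f c -> g c - f c <= Tr.
Hypothesis slope_gap : forall y, closer (argmin f) y x ->
  forall u, subdiff ip f y u -> forall e, 0 < e ->
  exists v, subdiff ip g y v /\ `|v| <= `|u| + Sr + e.
(* d0 is the distance from x to argmin f. *)
Hypothesis dist_x : forall eta, 0 < eta -> exists c, argmin f c /\ `|x - c| < d0 + eta.

Lemma gap_lipschitz (eps : R) (y z u : H) : 0 < eps ->
  closer (argmin f) y x -> subdiff ip f y u ->
  g y - g z <= (`|u| + Sr + eps) * `|y - z|.
Proof.
move=> eps0 yx hu; have [v [hv vb]] := slope_gap _ yx _ hu _ eps0.
have := hv z; rewrite -[z - y]opprB (ipNr hip).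
have := cauchy_schwarz hip v (y - z).
have := ler_wpM2r (normr_ge0 (y - z)) vb; lra.
Qed.

(* The gap is already controlled at points where f has a subgradient of
   norm at most delta: compare with a near-closest minimizer c of f. *)
Lemma gap_small_subgradient (eps : R) (z u : H) :
  0 <= Sr -> 0 < delta -> 0 < eps ->
  closer (argmin f) z x -> subdiff ip f z u -> `|u| <= delta ->
  g z - f z <= Tr + (delta + Sr + eps) * d0.
Proof.
move=> Sr0 delta0 eps0 zx hu ud; apply/ler_addgt0Pr => eta eta0.
set K := delta + Sr + eps; have K0 : 0 < K by rewrite /K; lra.
have [c [hc xc]] := dist_x _ (divr_gt0 eta0 K0).
have lip := gap_lipschitz _ _ c _ eps0 zx hu.
have grow : (`|u| + Sr + eps) * `|z - c| <= K * `|x - c|.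
  apply: ler_pM; [have := normr_ge0 u; lra | exact: normr_ge0 | | exact: zx].
  by rewrite /K; lra.
have near_c : K * `|x - c| <= K * d0 + eta.
  have := ler_wpM2l (ltW K0) (ltW xc).
  by rewrite mulrDr mulrCA mulfV ?gt_eqF // mulr1.
have := gap_argmin _ hc; have : f c <= f z by apply: hc.
lra.
Qed.

(* Run proximal steps of size tau from y;
   each step either reaches a point where the subgradient has norm at most
   delta (and gap_small_subgradient applies), or has length more than
   tau delta and then pays for the growth of g by a decrease of f at rate
   (Sr + eps) / delta.  Since f - fs is finite, the process stops after
   fewer than n steps when f y - fs < n tau delta^2. *)
Lemma gap_descent (eps tau : R) (n : nat) :
  0 <= Sr -> 0 < delta -> 0 < eps -> 0 < tau ->
  forall y u, closer (argmin f) y x -> subdiff ip f y u ->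
  f y - fs < n%:R * (tau * delta ^+ 2) ->
  g y - f y <= Tr + (delta + Sr + eps) * d0 + (Sr + eps) / delta * (f y - fs)
               + (Sr + eps) * tau * delta + tau * `|u| ^+ 2 / 2.
Proof.
move=> Sr0 delta0 eps0 tau0; elim: n => [|n IH] y u yx hu hn.
  by have := hfs y; rewrite mul0r in hn; lra.
have [z [v [hv yz descent zy]]] := prox_step _ _ _ y hip cf contf hfs tau0.
have zx : closer (argmin f) z x by move=> c hc; apply: le_trans (zy c hc) (yx c hc).
have := gap_lipschitz _ _ z _ eps0 yx hu; rewrite yz normrZ gtr0_norm //.
move: descent; set a := `|u|; set b := `|v| => descent lip.
have b0 : 0 <= b by exact: normr_ge0.
have young : tau * (a * b) <= tau * (a ^+ 2 / 2 + b ^+ 2 / 2).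
  by rewrite ler_pM2l //; have := sqr_ge0 (a - b); rewrite sqrrB; lra.
have L0 : 0 <= (Sr + eps) / delta by rewrite divr_ge0 // ?ltW //; lra.
have fyfs : 0 <= (Sr + eps) / delta * (f y - fs) by rewrite mulr_ge0 // subr_ge0.
case: (leP b delta) => hb.
- have := gap_small_subgradient _ _ _ Sr0 delta0 eps0 zx hv hb.
  have : (Sr + eps) * (tau * b) <= (Sr + eps) * tau * delta.
    by rewrite -mulrA ler_wpM2l ?ler_wpM2l //; lra.
  have := mulr_ge0 (ltW tau0) (sqr_ge0 b); lra.
- have fz : f z - fs < n%:R * (tau * delta ^+ 2).
    have : tau * delta ^+ 2 < tau * b ^+ 2.
      by rewrite ltr_pM2l // ltr_pXn2r // nnegrE ?normr_ge0 // ltW.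
    by move: hn; rewrite -natr1 mulrDl mul1r; lra.
  have := IH z v zx hv fz; rewrite -/b.
  have hLb : Sr + eps <= (Sr + eps) / delta * b.
    by rewrite mulrAC ler_pdivlMr // ler_wpM2l ?ltW //; lra.
  have := ler_wpM2r (mulr_ge0 (ltW tau0) b0) hLb.
  have := ler_wpM2l L0 descent.
  lra.
Qed.

(* The same bound without the a priori control of f y - fs: choose n by
   the archimedean property. *)
Lemma gap_subgradient (eps tau : R) : 0 <= Sr -> 0 < delta -> 0 < eps -> 0 < tau ->
  forall y u, closer (argmin f) y x -> subdiff ip f y u ->
  g y - f y <= Tr + (delta + Sr + eps) * d0 + (Sr + eps) / delta * (f y - fs)
               + (Sr + eps) * tau * delta + tau * `|u| ^+ 2 / 2.
Proof.
move=> Sr0 delta0 eps0 tau0 y u yx hu.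
have step0 : 0 < tau * delta ^+ 2 by rewrite mulr_gt0 ?exprn_gt0.
have q0 : 0 <= (f y - fs) / (tau * delta ^+ 2).
  by rewrite divr_ge0 ?subr_ge0 ?hfs ?ltW.
apply: (gap_descent _ _ (Num.bound ((f y - fs) / (tau * delta ^+ 2)))) => //.
by rewrite -ltr_pdivrMr //; exact: archi_boundP.
Qed.

(* A single proximal step from x reaches a point y1 where f has a
   subgradient; the gap at x is the gap at y1 up to g x - g y1. *)
Lemma gap_after_prox (eps tau : R) : 0 <= Sr -> 0 < delta -> 0 < eps -> 0 < tau ->
  exists y1, `|x - y1| ^+ 2 <= tau * (f x - fs) /\
    g x - f x <= (g x - g y1) + Tr + (delta + Sr + eps) * d0
                 + (Sr + eps) / delta * (f x - fs) + (Sr + eps) * tau * delta.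
Proof.
move=> Sr0 delta0 eps0 tau0.
have [y1 [u [hu xy descent y1x]]] := prox_step _ _ _ x hip cf contf hfs tau0.
have tu0 : 0 <= tau * `|u| ^+ 2 by rewrite mulr_ge0 ?sqr_ge0 ?ltW.
have fy1 : f y1 - fs <= f x - fs by lra.
exists y1; split.
  rewrite xy normrZ gtr0_norm // exprMn expr2 -mulrA ler_pM2l //.
  by have := hfs y1; lra.
have := gap_subgradient _ _ Sr0 delta0 eps0 tau0 _ _ y1x hu.
have L0 : 0 <= (Sr + eps) / delta by rewrite divr_ge0 ?ltW //; lra.
have := ler_wpM2l L0 fy1; lra.
Qed.

(* Letting the step size tau go to 0, continuity of g removes the last
   two error terms. *)
Lemma gap_eps (eps : R) : 0 <= Sr -> 0 < delta -> 0 < eps ->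
  g x - f x <= Tr + (delta + Sr + eps) * d0 + (Sr + eps) / delta * (f x - fs).
Proof.
move=> Sr0 delta0 eps0; apply/ler_addgt0Pr => e e0.
have e2 : 0 < e / 2 by rewrite divr_gt0.
have [rho rho0 near_x] : exists2 rho, 0 < rho &
    forall z, `|x - z| < rho -> g x - g z < e / 2.
  have /cvgrPdist_lt /(_ _ e2) /nbhs_ballP [rho rho0 hball] := contg x.
  exists rho => // z xz; have := hball z; rewrite -ball_normE /= => /(_ xz).
  by rewrite ltr_norml => /andP[].
set M := f x - fs; have M0 : 0 <= M by rewrite subr_ge0.
set W := (Sr + eps) * delta + 1.
have W0 : 0 < W.
  by rewrite /W; have := mulr_ge0 (addr_ge0 Sr0 (ltW eps0)) (ltW delta0); lra.
set tau := Num.min (rho ^+ 2 / (M + 1)) (e / (2 * W)).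
have tau0 : 0 < tau by rewrite lt_min !divr_gt0 ?exprn_gt0 ?mulr_gt0 //; lra.
have [y1 [xy1 gap]] := gap_after_prox _ _ Sr0 delta0 eps0 tau0; rewrite -/M in xy1 gap.
have close : `|x - y1| < rho.
  rewrite -(ltr_pXn2r (n := 2)) ?nnegrE ?normr_ge0 ?ltW //; apply: le_lt_trans xy1 _.
  have : tau * M <= rho ^+ 2 / (M + 1) * M by rewrite ler_wpM2r // ge_min lexx.
  have : rho ^+ 2 / (M + 1) * M < rho ^+ 2.
    by rewrite mulrAC ltr_pdivrMr ?ltr_pM2l ?exprn_gt0 //; lra.
  lra.
have : (Sr + eps) * tau * delta <= e / 2.
  have : tau * W <= e / 2.
    rewrite -ler_pdivlMr // -mulrA -invfM.
    by rewrite ge_min lexx orbT.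
  have := ltW tau0; rewrite /W; lra.
have := near_x _ close; lra.
Qed.

(* The estimate of the theorem for finite sups Sr and Tr, letting eps -> 0. *)
Lemma gap_bound : 0 <= d0 -> 0 <= Sr -> 0 < delta ->
  g x - f x <= (Sr + delta) * d0 + Sr / delta * (f x - fs) + Tr.
Proof.
move=> d00 Sr0 delta0; apply/ler_addgt0Pr => e e0.
set M := f x - fs; have M0 : 0 <= M by rewrite subr_ge0.
set Q := d0 + M / delta + 1.
have Q0 : 0 < Q by rewrite /Q; have := divr_ge0 M0 (ltW delta0); lra.
set eps := e / Q; have eps0 : 0 < eps by rewrite divr_gt0.
have := gap_eps _ Sr0 delta0 eps0.
have -> : Tr + (delta + Sr + eps) * d0 + (Sr + eps) / delta * M
    = (Sr + delta) * d0 + Sr / delta * M + Tr + eps * (Q - 1).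
  by rewrite /Q; field; rewrite gt_eqF.
have : eps * (Q - 1) <= e by rewrite mulrBr mulr1 divfK ?gt_eqF //; lra.
lra.
Qed.

End GapEstimate.

Section ExtendedReals.
Context {R : realType} {H : completeNormedModType R}.
Local Open Scope ereal_scope.

Lemma fmin_argmin {f : H -> R} {c : H} : argmin f c -> fmin f = (f c)%:E.
Proof.
move=> hc; apply/eqP; rewrite eq_le; apply/andP; split.
  by apply: ereal_inf_lbound; exists c.
by apply: le_ereal_inf_tmp => _ [z _ <-]; rewrite lee_fin.
Qed.

Lemma dist_set_fin {C : set H} (x : H) {c0 : H} : C c0 ->
  exists d0, [/\ dist_set x C = d0%:E, (0 <= d0)%R &
    forall eta, (0 < eta)%R -> exists c, C c /\ (`|x - c| < d0 + eta)%R].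
Proof.
move=> hc0.
have lb : 0 <= dist_set x C.
  by apply: le_ereal_inf_tmp => _ [c hc <-]; rewrite lee_fin normr_ge0.
have ub : dist_set x C <= (`|x - c0|)%:E.
  by apply: ereal_inf_lbound; exists c0.
move: lb ub; case E: (dist_set x C) => [d0| |] //= lb ub.
exists d0; split => // eta eta0.
have : dist_set x C < (d0 + eta)%:E by rewrite E lte_fin ltrDl.
by case/ereal_inf_lt => _ [c hc <-]; rewrite lte_fin => xc; exists c.
Qed.

Lemma dist_set_mem {C : set H} {x : H} : C x -> dist_set x C = 0.
Proof.
move=> Cx; apply/eqP; rewrite eq_le; apply/andP; split.
  by apply: ereal_inf_lbound; exists x => //; rewrite subrr normr0.
by apply: le_ereal_inf_tmp => _ [c _ <-]; rewrite lee_fin normr_ge0.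
Qed.

Lemma dist_set_closer {C : set H} {x y : H} :
  closer C y x -> dist_set y C <= dist_set x C.
Proof.
move=> yx; apply: le_ereal_inf_tmp => _ [c hc <-].
apply: le_trans (_ : (`|y - c|)%:E <= _); last by rewrite lee_fin yx.
by apply: ereal_inf_lbound; exists c.
Qed.

Lemma pos_sup_ge0 {w : H -> \bar R} {U : set H} {y : H} : U y -> 0 <= pos_sup w U.
Proof.
move=> Uy; apply: le_trans (_ : maxe (w y) 0 <= _); first by rewrite le_max lexx orbT.
by apply: ereal_sup_ubound; exists y.
Qed.

Lemma pos_sup_ub {w : H -> \bar R} {U : set H} {y : H} : U y -> w y <= pos_sup w U.
Proof.
move=> Uy; apply: le_trans (_ : maxe (w y) 0 <= _); first by rewrite le_max lexx.
by apply: ereal_sup_ubound; exists y.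
Qed.

Lemma subgradient_of_slope_gap {ip : H -> H -> R} {f g : H -> R} {y u : H}
    {Sr e : R} :
  slope ip g y - slope ip f y <= Sr%:E -> subdiff ip f y u -> (0 < e)%R ->
  exists v, subdiff ip g y v /\ (`|v| <= `|u| + Sr + e)%R.
Proof.
move=> gap hu e0.
have sf0 : 0 <= slope ip f y.
  by apply: le_ereal_inf_tmp => _ [v _ <-]; rewrite lee_fin normr_ge0.
have sfu : slope ip f y <= (`|u|)%:E.
  by apply: ereal_inf_lbound; exists u => //; rewrite sub0r normrN.
move: sf0 sfu gap; case: (slope ip f y) => [sf| |] // _; rewrite lee_fin => sfu.
rewrite leeBlDr // => gap.
have : slope ip g y < (`|u| + Sr + e)%:E.
  by apply: le_lt_trans gap _; rewrite -EFinD lte_fin; lra.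
by case/ereal_inf_lt => _ [v hv <-]; rewrite lte_fin sub0r normrN => /ltW; exists v.
Qed.

(* Points nearer to argmin f than x stay in U, where the slope gap is Sr. *)
Lemma slope_gap_near {ip : H -> H -> R} {f g : H -> R} {r Sr : R} {x : H} :
  dist_set x (argmin f) <= r%:E ->
  pos_sup (fun y => slope ip g y - slope ip f y)
    [set y | dist_set y (argmin f) <= r%:E] = Sr%:E ->
  forall y, closer (argmin f) y x -> forall u, subdiff ip f y u ->
  forall e, (0 < e)%R -> exists v, subdiff ip g y v /\ (`|v| <= `|u| + Sr + e)%R.
Proof.
move=> hx hS y yx u hu e e0; apply: subgradient_of_slope_gap hu e0.
by rewrite -hS; apply: pos_sup_ub; exact: le_trans (dist_set_closer yx) hx.
Qed.

Lemma rhs_pinfty {S T d m y : \bar R} {delta : R} :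
  0 <= S -> 0 <= T -> 0 <= d -> 0 < m -> (0 < delta)%R -> S = +oo \/ T = +oo ->
  y <= (S + delta%:E) * d + S * (delta^-1)%:E * m + T.
Proof.
move=> S0 T0 d0 m0 delta0 infinite.
have finite_below a : 0 <= a -> a != -oo by case: a.
have a0 : 0 <= (S + delta%:E) * d by rewrite mule_ge0 // adde_ge0 // lee_fin ltW.
have b0 : 0 <= S * (delta^-1)%:E * m.
  by apply: mule_ge0; [apply: mule_ge0; rewrite // lee_fin invr_ge0 ltW | exact: ltW].
case: infinite => [hS|->]; last by rewrite addey ?leey // finite_below // adde_ge0.
have -> : S * (delta^-1)%:E * m = +oo by rewrite hS !gt0_mulye ?lte_fin ?invr_gt0.
by rewrite addey ?finite_below // addye ?finite_below // leey.
Qed.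

End ExtendedReals.

Theorem mainTheorem4 (R : realType) (H : completeNormedModType R)
    (ip : H -> H -> R) (f g : H -> R) (r : R) :
  hilbert_inner ip ->
  convex_fun f -> convex_fun g ->
  continuous f -> continuous g ->
  argmin f !=set0 ->
  0 < r ->
  forall x : H, (dist_set x (argmin f) <= r%:E)%E ->
  forall delta : R, 0 < delta ->
  let U := [set y | (dist_set y (argmin f) <= r%:E)%E] in
  let S := pos_sup (fun y => slope ip g y - slope ip f y)%E U in
  let T := pos_sup (fun y => (g y - f y)%:E) (argmin f) in
  ((g x - f x)%:E <=
     (S + delta%:E) * dist_set x (argmin f)
     + (S * (delta^-1)%:E) * ((f x)%:E - fmin f)
     + T)%E.
Proof.
move=> hip cf _ contf contg [c0 hc0] _ x hx delta delta0; cbv zeta.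
set U := [set y | _]; set S := pos_sup _ U; set T := pos_sup _ (argmin f).
(* At a minimizer both the distance and f x - min f vanish. *)
have [xC|xnC] := pselect (argmin f x).
  rewrite (dist_set_mem xC) (fmin_argmin xC) subee // !mule0 !add0e.
  exact: pos_sup_ub.
have fx_gt : (0 < (f x)%:E - fmin f)%E.
  rewrite (fmin_argmin hc0) lte_fin subr_gt0 ltNge; apply/negP => fx_le.
  by apply: xnC => y; exact: le_trans fx_le (hc0 y).
have [d0 [hd0 d00 dist_x]] := dist_set_fin x hc0.
have S0 : (0 <= S)%E := pos_sup_ge0 (hx : U x).
have T0 : (0 <= T)%E := pos_sup_ge0 hc0.
(* An infinite S or T makes the right-hand side +oo. *)
rewrite hd0; move: S0 T0; case hS: S => [Sr| |] // S0; last first.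
  by move=> T0; apply: rhs_pinfty => //; left.
case hT: T => [Tr| |] // T0; last by apply: rhs_pinfty => //; right.
rewrite (fmin_argmin hc0) -EFinD lee_fin.
apply: (gap_bound _ _ _ _ _ _ _ _ hip cf contf contg hc0 _
         (slope_gap_near hx hS) dist_x) => //.
by move=> c hc; rewrite -lee_fin -hT; exact: pos_sup_ub.
Qed.
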